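(* Let $1<p\le2$ and $T\in(0,\infty)$. For $M\in\mathbb N$ and $h>0$ let non-negative sequences $\{a_m(h)\}_{m=0}^M$, $\{b_m(h)\}_{m=0}^M$, $\{r_m(h,\kappa)\}_{m=1}^M$, $\{s_m(h,\kappa)\}_{m=1}^M$, $\{\rho_m(h,\kappa)\}_{m=1}^M$, $\{\sigma_m(h,\kappa)\}_{m=1}^M$ be given, where $\kappa=T/M$. Assume there exist $\mu_0,\widehat\kappa>0$ such that for all $0<h<1/\sqrt{\mu_0}$ and $0<\kappa<\widehat\kappa$: $$a_0^2\le\mu_0h^2,\ \ b_0^2\le\mu_0h^2,\ \ \kappa\sum_{m=1}^Mr_m^2\le\mu_0h^2,\ \ \kappa\sum_{m=1}^Ms_m^2\le\mu_0h^2,\ \ \kappa\sum_{m=1}^M\rho_m^2\le\mu_0\kappa^2,\ \ \kappa\sum_{m=1}^M\sigma_m^2\le\mu_0\kappa^2.$$ Further, assume there exist constants $\mu_1,\mu_2,\mu_3>0$, $\Lambda>0$ and $0<\theta\le1$ such that for some $\lambda\in[0,\Lambda]$, for all $0<h<1/\sqrt{\mu_0}$, $0<\kappa<\widehat\kappa$ and $m=1,\dots,M$, both $$d_ta_m^2+\mu_1(\lambda+b_m)^{p-2}b_m^2\le b_mr_m+b_m\rho_m+\mu_2b_{m-1}b_m+s_m^2+\sigma_m^2,$$ $$d_ta_m^2+\mu_1(\lambda+b_m)^{p-2}b_m^2\le b_mr_m+b_m\rho_m+\mu_3b_mb_{m-1}^{1-\theta}a_{m-1}^{\theta}+s_m^2+\sigma_m^2$$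 hold (with the convention $(\lambda+b_m)^{p-2}b_m^2=0$ if $\lambda=b_m=0$). Then there exist constants $\overline{\mu_0},\overline\kappa>0$ and $\mu_4,\mu_5>0$, independent of $\lambda$, such that for all $\kappa,h>0$ with $\kappa<\overline\kappa$ and $h^2<\overline{\mu_0}\,\kappa$: $$\max_{0\le m\le M}b_m\le1,\qquad \max_{0\le m\le M}a_m^2+\mu_1(1+\Lambda)^{p-2}\kappa\sum_{m=0}^Mb_m^2\le\mu_4(h^2+\kappa^2)\exp(2\mu_5\kappa M).$$
   Context: $d_ta_m^2=(a_m^2-a_{m-1}^2)/\kappa$ denotes the backward difference quotient with step $\kappa=T/M$. *)

From HB Require Import structures.
From mathcomp Require Import all_boot all_order all_algebra.
From mathcomp Require Import all_classical all_reals sequences exp.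
Set Implicit Arguments. Unset Strict Implicit. Unset Printing Implicit Defensive.
Import Order.TTheory GRing.Theory Num.Theory.
Local Open Scope ring_scope.

Definition kappa (R : realType) (T : R) (M : nat) : R := T / M%:R.

Definition dt2 (R : realType) (T : R) (M : nat) (x : nat -> R) (m : nat) : R :=
  (x m ^+ 2 - x m.-1 ^+ 2) / kappa T M.

(* (lam + b)^(p-2) * b^2 ; with powR, 0 `^ y * 0 = 0, matching the convention *)
Definition dissip (R : realType) (p lam b : R) : R := (lam + b) `^ (p - 2) * b ^+ 2.

From HB Require Import structures.
From mathcomp Require Import all_boot all_order all_algebra.
From mathcomp Require Import all_classical all_reals sequences exp.
From mathcomp Require Import ring lra.
Import Order.TTheory GRing.Theory Num.Theory.
Set Implicit Arguments. Unset Strict Implicit. Unset Printing Implicit Defensive.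
Local Open Scope ring_scope.

(* With c = mu1 (1+Lam)^(p-2) and c' = mu1 / (1+Lam), the dissipation
   mu1 (lam + b)^(p-2) b^2 dominates c b^2 when b <= 1 and c' b when b >= 1.
   An interpolation inequality absorbs the coupling term
   mu3 b_m b_(m-1)^(1-theta) a_(m-1)^theta into b_m ((c'/4) b_(m-1) + K a_(m-1)).
   As long as every b_j <= 1, Young's inequality turns the scheme into
   G_m <= (1 + kappa L) G_(m-1) + kappa e_m for the energy
   G_m = a_m^2 + kappa (c/8) b_m^2 + kappa (c/4) sum_(j <= m) b_j^2, and the
   discrete Gronwall lemma gives G_m <= e^(L T) C (h^2 + kappa^2).  If moreover
   h^2 < eps kappa with eps small, then a_m^2 = O(eps kappa), the data are O(eps)
   pointwise, and b_(m+1) > 1 is impossible: the linear dissipation c' b_(m+1)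
   would exceed the whole right-hand side. *)

Lemma ler_psum_nat_widen (R : numDomainType) (F : nat -> R) (m n m' n' : nat) :
  (forall j, 0 <= F j) -> (m' <= m)%N -> (n <= n')%N ->
  \sum_(m <= j < n) F j <= \sum_(m' <= j < n') F j.
Proof.
move=> F0 m'm nn'; have sum_ge0 i l : 0 <= \sum_(i <= j < l) F j by exact: sumr_ge0.
case: (leqP n m) => [nm | mn]; first by rewrite big_geq.
rewrite [X in _ <= X](big_cat_nat (n := m)) ?(leq_trans (ltnW mn)) //=.
apply: ler_wpDl => //; rewrite [X in _ <= X](big_cat_nat (n := n)) ?(ltnW mn) //=.
exact: ler_wpDr.
Qed.

Lemma mulr_le_Young (R : realFieldType) (e x y : R) : 0 < e ->
  x * y <= e * x ^+ 2 + y ^+ 2 / (4 * e).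
Proof.
move=> e0; rewrite -subr_ge0.
have -> : e * x ^+ 2 + y ^+ 2 / (4 * e) - x * y = (2 * e * x - y) ^+ 2 / (4 * e).
  by field; rewrite gt_eqF.
by rewrite divr_ge0 ?sqr_ge0 //; lra.
Qed.

Lemma discrete_gronwall (R : numDomainType) (q : R) (G f : nat -> R) (n : nat) :
  1 <= q -> (forall j, 0 <= f j) ->
  (forall j, (j < n)%N -> G j.+1 <= q * G j + f j.+1) ->
  G n <= q ^+ n * (G 0%N + \sum_(1 <= j < n.+1) f j).
Proof.
move=> q1 f0; elim: n => [|n IH] step; first by rewrite expr0 mul1r big_geq ?addr0.
apply: (le_trans (step n (ltnSn n))).
rewrite big_nat_recr //= addrA mulrDr; apply: lerD; last by rewrite ler_peMl ?exprn_ege1.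
rewrite exprS -mulrA ler_wpM2l ?(le_trans ler01 q1) // IH // => j /ltnW.
exact: step.
Qed.

Lemma exprn1D_le_expR (R : realType) (x : R) (n : nat) : 0 <= 1 + x ->
  (1 + x) ^+ n <= expR (x * n%:R).
Proof.
by move=> x1; rewrite expRM_natr lerXn2r ?nnegrE ?expR_ge0 ?expR_ge1Dx.
Qed.

Lemma exists_gt0_lt_all (R : realFieldType) (s : seq R) :
  all (fun x => 0 < x) s -> exists2 e : R, 0 < e & all (fun x => e < x) s.
Proof.
elim: s => [|x s IH]; first by exists 1.
move=> /andP[x0 /IH[e e0 es]]; exists (Num.min (x / 2) e).
  by rewrite lt_min e0 divr_gt0.
rewrite /= gt_min ltr_pdivrMr // ltr_pMr // ltr1n; apply/allP => y ys.
by rewrite gt_min (allP es y ys) orbT.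
Qed.

Lemma powR_interp_le_add (R : realType) (t x y : R) : 0 <= t <= 1 ->
  0 <= x -> 0 <= y -> x `^ (1 - t) * y `^ t <= x + y.
Proof.
move=> /andP[t0 t1] x0 y0.
have powR_split z : 0 <= z -> z `^ (1 - t) * z `^ t = z.
  by move=> z0; rewrite -powRD ?subrK ?oner_eq0 // powRr1.
case: (leP y x) => [yx | xy].
- apply: (@le_trans _ _ x); last by rewrite lerDl.
  rewrite -[leRHS](powR_split x x0) ler_wpM2l ?powR_ge0 //.
  exact: ge0_ler_powR.
- apply: (@le_trans _ _ y); last by rewrite lerDr.
  rewrite -[leRHS](powR_split y y0) ler_wpM2r ?powR_ge0 //.
  by apply: ge0_ler_powR; rewrite ?nnegrE ?subr_ge0 // ltW.
Qed.

Lemma powR_interp_absorb (R : realType) (mu t eta : R) :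
  0 < mu -> 0 < t -> t <= 1 -> 0 < eta ->
  exists2 K : R, 0 < K & forall x y, 0 <= x -> 0 <= y ->
    mu * (x `^ (1 - t) * y `^ t) <= eta * x + K * y.
Proof.
(* Rescale x by u = eta / mu and y by v, chosen so that u^(1-t) v^t = 1. *)
move=> mu0 t0 t1 eta0; set u := eta / mu; set v := u `^ ((t - 1) / t).
have u0 : 0 < u by exact: divr_gt0.
have v0 : 0 <= v by exact: powR_ge0.
have uv_weight : u `^ (1 - t) * v `^ t = 1.
  rewrite -powRrM divfK ?(gt_eqF t0) // -powRD ?(gt_eqF u0) ?implybT //.
  by rewrite (_ : 1 - t + (t - 1) = 0) ?powRr0 //; ring.
exists (mu * v) => [|x y x0 y0]; first by rewrite mulr_gt0 ?powR_gt0.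
have := @powR_interp_le_add R t (u * x) (v * y).
rewrite (ltW t0) t1 (powRM _ (ltW u0) x0) (powRM _ v0 y0) mulrACA uv_weight mul1r.
move=> /(_ isT (mulr_ge0 (ltW u0) x0) (mulr_ge0 v0 y0)) /(ler_wpM2l (ltW mu0)).
by rewrite mulrDr !mulrA [mu * eta]mulrC mulfK ?gt_eqF.
Qed.

Lemma dissip_ge_sqr (R : realType) (p lam Lam b : R) : p <= 2 ->
  0 <= lam -> lam <= Lam -> 0 <= b -> b <= 1 ->
  (1 + Lam) `^ (p - 2) * b ^+ 2 <= dissip p lam b.
Proof.
move=> p2 lam0 lamL b0 b1; rewrite /dissip.
have [->|b_neq0] := eqVneq b 0; first by rewrite expr0n /= !mulr0.
rewrite ler_wpM2r ?sqr_ge0 // (_ : p - 2 = - (2 - p)); last by ring.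
have b_gt0 : 0 < b by rewrite lt_def b_neq0.
rewrite !powRN lef_pV2 ?posrE ?powR_gt0 //; try lra.
by apply: ge0_ler_powR; rewrite ?nnegrE; lra.
Qed.

Lemma dissip_ge_lin (R : realType) (p lam Lam b : R) : 1 <= p ->
  0 <= lam -> lam <= Lam -> 1 <= b ->
  b / (1 + Lam) <= dissip p lam b.
Proof.
move=> p1 lam0 lamL b1; rewrite /dissip.
have -> : b / (1 + Lam) = ((1 + Lam) * b)^-1 * b ^+ 2.
  by field; apply/andP; split; rewrite gt_eqF //; lra.
rewrite ler_wpM2r ?sqr_ge0 //; apply: (@le_trans _ _ (lam + b)^-1).
  by rewrite lef_pV2 ?posrE; nra.
rewrite -powR_inv1; last by lra.
by apply: ler_powR; lra.
Qed.

Lemma kappa_mulrn (R : realType) (T : R) (M : nat) :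
  0 < kappa T M -> kappa T M * M%:R = T.
Proof.
move=> k0; have M_neq0 : M%:R != 0 :> R.
  by apply: contraTneq k0; rewrite /kappa => ->; rewrite invr0 mulr0 ltxx.
by rewrite /kappa divfK.
Qed.

Lemma ltr_inv_sqrt_sqr (R : rcfType) (x h : R) : 0 < x -> 0 <= h ->
  h ^+ 2 < x^-1 -> h < (Num.sqrt x)^-1.
Proof.
move=> x0 h0 hx.
by rewrite -sqrtrV ?ltW // -[h]ger0_norm // -sqrtr_sqr ltr_sqrt // invr_gt0.
Qed.

(* [eps * bootstrap_const] collects the bounds eps (2 E C) on a_m^2 / kappa and
   eps mu0 on the squared data that enter the bootstrap step [b_succ_le1]. *)
Definition bootstrap_const (R : realFieldType) (c' K E C mu0 : R) : R :=
  2 * E * C + 2 * mu0 + 4 / c' * (2 * mu0 + 2 * K ^+ 2 * E * C).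

Lemma bootstrap_const_gt0 (R : realFieldType) (c' K E C mu0 : R) :
  0 < c' -> 0 <= E -> 0 <= C -> 0 < mu0 -> 0 < bootstrap_const c' K E C mu0.
Proof.
move=> c'_gt0 E_ge0 C_ge0 mu0_gt0; have EC_ge0 := mulr_ge0 E_ge0 C_ge0.
have K2EC_ge0 : 0 <= 2 * K ^+ 2 * E * C.
  by rewrite -mulrA; exact: mulr_ge0 (mulr_ge0 (ler0n _ 2) (sqr_ge0 K)) EC_ge0.
apply: ltr_wpDr; first exact: mulr_ge0 (divr_ge0 (ler0n _ 4) (ltW c'_gt0))
  (addr_ge0 (mulr_ge0 (ler0n _ 2) (ltW mu0_gt0)) K2EC_ge0).
apply: ltr_wpDl (mulr_gt0 (ltr0n _ 2) mu0_gt0).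
by rewrite -mulrA; exact: mulr_ge0 (ler0n _ 2) EC_ge0.
Qed.

Section DiscreteEnergyBootstrap.
Variables (R : realType) (M : nat) (k h eps c c' K E mu0 : R).
Variables (a b r s rho sig d : nat -> R).

Local Notation L := (2 / c * K ^+ 2).
Local Notation C := (mu0 * (2 + c + 2 / c)).

Hypotheses (k_gt0 : 0 < k) (k_lt_eps : k < eps) (eps_le1 : eps <= 1).
Hypothesis h_small : h ^+ 2 < eps * k.
Hypotheses (c_gt0 : 0 < c) (c'_gt0 : 0 < c') (c'_le_c : c' <= c).
Hypothesis mu0_gt0 : 0 < mu0.
Hypothesis growth_le : (1 + k * L) ^+ M <= E.
Hypothesis eps_mu0 : eps * mu0 < 1.
Hypothesis eps_small : eps * bootstrap_const c' K E C mu0 < c' / 4.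
Hypothesis b_ge0 : forall m, 0 <= b m.
Hypotheses (a0_le : a 0%N ^+ 2 <= mu0 * h ^+ 2) (b0_le : b 0%N ^+ 2 <= mu0 * h ^+ 2).
Hypotheses (r_sum : k * (\sum_(1 <= m < M.+1) r m ^+ 2) <= mu0 * h ^+ 2)
           (s_sum : k * (\sum_(1 <= m < M.+1) s m ^+ 2) <= mu0 * h ^+ 2)
           (rho_sum : k * (\sum_(1 <= m < M.+1) rho m ^+ 2) <= mu0 * k ^+ 2)
           (sig_sum : k * (\sum_(1 <= m < M.+1) sig m ^+ 2) <= mu0 * k ^+ 2).
Hypothesis d_ge_sqr : forall m, (1 <= m <= M)%N -> b m <= 1 -> c * b m ^+ 2 <= d m.
Hypothesis d_ge_lin : forall m, (1 <= m <= M)%N -> 1 <= b m -> c' * b m <= d m.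
Hypothesis energy_ineq : forall m, (1 <= m <= M)%N ->
  (a m ^+ 2 - a m.-1 ^+ 2) / k + d m
    <= b m * r m + b m * rho m + b m * (c' / 4 * b m.-1 + K * a m.-1)
       + s m ^+ 2 + sig m ^+ 2.

Let k_le1 : k <= 1. Proof. exact: ltW (lt_le_trans k_lt_eps eps_le1). Qed.
Let k_ge0 : 0 <= k. Proof. exact: ltW. Qed.
Let c_ge0 : 0 <= c. Proof. exact: ltW. Qed.
Let eps_gt0 : 0 < eps. Proof. exact: lt_trans k_lt_eps. Qed.
Let C_gt0 : 0 < C. Proof. by rewrite mulr_gt0 // !addr_gt0 ?divr_gt0. Qed.
Let kc_ge0 n : 0 <= k * (c / n%:R). Proof. by rewrite mulr_ge0 ?divr_ge0. Qed.
Let L_ge0 : 0 <= L. Proof. exact: mulr_ge0 (divr_ge0 (ler0n _ 2) c_ge0) (sqr_ge0 K). Qed.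
Let E_ge1 : 1 <= E.
Proof. by apply: le_trans growth_le; rewrite exprn_ege1 // lerDl mulr_ge0. Qed.

(* The extra k (c/8) b_m^2 absorbs the cross term b_m b_(m-1) of the next step. *)
Let energy m := a m ^+ 2 + k * (c / 8) * b m ^+ 2
  + k * (c / 4) * \sum_(j < m.+1) b j ^+ 2.

Let source m := 2 / c * (r m ^+ 2 + rho m ^+ 2) + s m ^+ 2 + sig m ^+ 2.

Let bsum_ge0 m : 0 <= \sum_(j < m.+1) b j ^+ 2.
Proof. by apply: sumr_ge0 => j _; exact: sqr_ge0. Qed.

Let energy_ge_sqr m : a m ^+ 2 <= energy m.
Proof.
rewrite /energy -addrA lerDl.
exact: addr_ge0 (mulr_ge0 (kc_ge0 8) (sqr_ge0 _)) (mulr_ge0 (kc_ge0 4) (bsum_ge0 m)).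
Qed.

Let energy_ge_bsum m : k * (c / 4) * \sum_(j < m.+1) b j ^+ 2 <= energy m.
Proof.
rewrite /energy lerDr.
exact: addr_ge0 (sqr_ge0 _) (mulr_ge0 (kc_ge0 8) (sqr_ge0 _)).
Qed.

Let energy_ge0 m : 0 <= energy m.
Proof. exact: le_trans (sqr_ge0 _) (energy_ge_sqr m). Qed.

Let source_ge0 m : 0 <= source m.
Proof.
by rewrite /source !addr_ge0 ?sqr_ge0 // mulr_ge0 ?addr_ge0 ?sqr_ge0 ?divr_ge0.
Qed.

Lemma initial_energy_le :
  energy 0%N + \sum_(1 <= j < M.+1) k * source j <= C * (h ^+ 2 + k ^+ 2).
Proof.
have -> : \sum_(1 <= j < M.+1) k * source j =
    2 / c * (k * (\sum_(1 <= j < M.+1) r j ^+ 2) + k * (\sum_(1 <= j < M.+1) rho j ^+ 2))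
    + k * (\sum_(1 <= j < M.+1) s j ^+ 2) + k * (\sum_(1 <= j < M.+1) sig j ^+ 2).
  rewrite -mulr_sumr /source !big_split /= -mulr_sumr big_split /=; ring.
rewrite /energy big_ord_recr big_ord0 /= add0r.
have kb0 : k * b 0%N ^+ 2 <= mu0 * h ^+ 2.
  by apply: le_trans b0_le; rewrite ler_piMl ?sqr_ge0.
have c2 : 0 <= 2 / c by rewrite divr_ge0 // ltW.
have := ler_wpM2l c2 (lerD r_sum rho_sum).
have := ler_wpM2l (ltW c_gt0) kb0.
have := mulr_ge0 c2 (mulr_ge0 (ltW mu0_gt0) (sqr_ge0 k)).
have := mulr_ge0 (ltW c_gt0) (mulr_ge0 (ltW mu0_gt0) (sqr_ge0 k)).
have := mulr_ge0 (ltW c_gt0) (mulr_ge0 (ltW mu0_gt0) (sqr_ge0 h)).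
have := mulr_ge0 (ltW mu0_gt0) (sqr_ge0 h); have := mulr_ge0 (ltW mu0_gt0) (sqr_ge0 k).
move: (a0_le) (s_sum) (sig_sum); lra.
Qed.

Lemma energy_step m : (m < M)%N -> b m.+1 <= 1 ->
  energy m.+1 <= (1 + k * L) * energy m + k * source m.+1.
Proof.
move=> mM bm1; have m1M : (1 <= m.+1 <= M)%N by [].
have young x y : x * y <= c / 8 * x ^+ 2 + 2 / c * y ^+ 2.
  rewrite (_ : 2 / c * y ^+ 2 = y ^+ 2 / (4 * (c / 8))); last by field; exact: lt0r_neq0.
  by apply: (@mulr_le_Young R); rewrite divr_gt0.
have := energy_ineq m1M; have := d_ge_sqr m1M bm1; rewrite /energy big_ord_recr /=.
set beta := b m.+1; set bm := b m; set am := a m; set S := \sum_(i < m.+1) _.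
move=> diss ineq.
have cross : beta * (c' / 4 * bm) <= c / 8 * (beta ^+ 2 + bm ^+ 2).
  have beta_bm : 0 <= beta * bm by exact: mulr_ge0 (b_ge0 _) (b_ge0 _).
  have : beta * (c' / 4 * bm) <= c / 4 * (beta * bm).
    by rewrite mulrCA; apply: ler_wpM2r => //; move: c'_le_c; lra.
  have := sqr_ge0 (beta - bm); move: c_gt0; nra.
have rhs_le : beta * r m.+1 + beta * rho m.+1 + beta * (c' / 4 * bm + K * am)
    + s m.+1 ^+ 2 + sig m.+1 ^+ 2
    <= c / 2 * beta ^+ 2 + c / 8 * bm ^+ 2 + L * am ^+ 2 + source m.+1.
  have := young beta (r m.+1); have := young beta (rho m.+1).
  have := young beta (K * am); rewrite /source exprMn mulrDr; lra.
have := ler_wpM2l (ltW k_gt0) (le_trans ineq rhs_le).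
rewrite mulrDr [k * (_ / k)]mulrC divfK ?gt_eqF //.
have := ler_wpM2l (ltW k_gt0) diss.
have S_ge0 : 0 <= S := bsum_ge0 m.
have := mulr_ge0 (mulr_ge0 k_ge0 L_ge0)
  (addr_ge0 (mulr_ge0 (kc_ge0 8) (sqr_ge0 bm)) (mulr_ge0 (kc_ge0 4) S_ge0)).
have := mulr_ge0 (kc_ge0 8) (sqr_ge0 beta).
lra.
Qed.

Lemma energy_le m : (m <= M)%N -> (forall j, (1 <= j <= m)%N -> b j <= 1) ->
  energy m <= E * (C * (h ^+ 2 + k ^+ 2)).
Proof.
move=> mM bm1; have q1 : 1 <= 1 + k * L by rewrite lerDl mulr_ge0.
have W_ge0 n : 0 <= energy 0%N + \sum_(1 <= j < n.+1) k * source j.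
  by rewrite addr_ge0 // sumr_ge0 // => j _; rewrite mulr_ge0.
apply: le_trans (@discrete_gronwall R _ energy (fun j => k * source j) m q1 _ _) _.
- by move=> j; rewrite mulr_ge0.
- move=> j jm; apply: energy_step; first exact: leq_trans jm mM.
  exact: bm1.
apply: ler_pM; rewrite ?exprn_ge0 ?(le_trans ler01 q1) //.
  exact: le_trans (ler_weXn2l q1 mM) growth_le.
apply: le_trans initial_energy_le; rewrite lerD2l.
by apply: ler_psum_nat_widen => // j; rewrite mulr_ge0.
Qed.

Lemma data_sqr_le m : (1 <= m <= M)%N ->
  [/\ r m ^+ 2 <= mu0 * eps, s m ^+ 2 <= mu0 * eps,
      rho m ^+ 2 <= mu0 * eps & sig m ^+ 2 <= mu0 * eps].
Proof.
move=> /andP[m1 mM].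
have pointwise (f : nat -> R) B : k * (\sum_(1 <= j < M.+1) f j ^+ 2) <= B ->
    B <= mu0 * eps * k -> f m ^+ 2 <= mu0 * eps.
  move=> sumB Bk; rewrite -(ler_pM2r k_gt0) mulrC; apply: le_trans Bk.
  apply: le_trans sumB; rewrite ler_wpM2l //.
  rewrite (_ : f m ^+ 2 = \sum_(m <= j < m.+1) f j ^+ 2); last by rewrite big_nat1.
  by apply: ler_psum_nat_widen => // j; exact: sqr_ge0.
have hk : mu0 * h ^+ 2 <= mu0 * eps * k by rewrite -mulrA ler_pM2l // ltW.
have kk : mu0 * k ^+ 2 <= mu0 * eps * k.
  by rewrite -mulrA ler_pM2l // expr2 ler_pM2r // ltW.
by split; [exact: pointwise r_sum hk | exact: pointwise s_sum hk
  | exact: pointwise rho_sum kk | exact: pointwise sig_sum kk].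
Qed.


Lemma b_succ_le1 m : (m < M)%N -> (forall j, (j <= m)%N -> b j <= 1) ->
  b m.+1 <= 1.
Proof.
move=> mM bm1; have m1M : (1 <= m.+1 <= M)%N by [].
set A := 2 * E * C * eps; set beta := b m.+1; set am := a m.
have EC_ge0 : 0 <= E * C by rewrite mulr_ge0 ?ltW // (lt_le_trans ltr01 E_ge1).
have A_ge0 : 0 <= A by rewrite /A mulr_ge0 ?(ltW eps_gt0) // -mulrA mulr_ge0.
have em : energy m <= E * (C * (h ^+ 2 + k ^+ 2)).
  by apply: energy_le (ltnW mM) _ => j /andP[_]; exact: bm1.
have am2k : am ^+ 2 <= A * k.
  apply: le_trans (energy_ge_sqr m) (le_trans em _).
  have hk2 : h ^+ 2 + k ^+ 2 <= 2 * eps * k.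
    have : k ^+ 2 <= eps * k by rewrite expr2 ler_pM2r // ltW.
    by move: (h_small); lra.
  by have := ler_wpM2l EC_ge0 hk2; rewrite /A mulrA; lra.
have am2 : am ^+ 2 <= A by apply: le_trans am2k _; rewrite ler_piMr.
have [r2 s2 rho2 sig2] := data_sqr_le m1M.
have young x : x <= c' / 16 + 4 / c' * x ^+ 2.
  have -> : 4 / c' * x ^+ 2 = x ^+ 2 / (4 * (c' / 16)) by field; exact: lt0r_neq0.
  have := @mulr_le_Young R (c' / 16) 1 x; rewrite mul1r expr1n mulr1.
  by apply; rewrite divr_gt0.
(* A step with b_(m+1) > 1 would make c' b_(m+1) exceed the right-hand side. *)
rewrite leNgt; apply/negP => beta_gt1.
set X := r m.+1 + rho m.+1 + c' / 4 + K * am.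
set Y := A + s m.+1 ^+ 2 + sig m.+1 ^+ 2.
have absorbed : c' * beta <= beta * X + Y.
  have := energy_ineq m1M; have := d_ge_lin m1M (ltW beta_gt1).
  have : am ^+ 2 / k <= A by rewrite ler_pdivrMr.
  have : 0 <= a m.+1 ^+ 2 / k by rewrite divr_ge0 ?sqr_ge0.
  have : beta * (c' / 4 * b m) <= beta * (c' / 4).
    by rewrite ler_wpM2l ?(le_trans ler01 (ltW beta_gt1)) // ler_piMr ?bm1 // divr_ge0 ?ltW.
  rewrite /X /Y /= -/beta -/am; lra.
have small : X + Y < c'.
  have := young (r m.+1); have := young (rho m.+1); have := young (K * am).
  have : 4 / c' * (r m.+1 ^+ 2 + rho m.+1 ^+ 2 + (K * am) ^+ 2)
      <= 4 / c' * (2 * (mu0 * eps) + K ^+ 2 * A).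
    rewrite ler_wpM2l ?divr_ge0 ?(ltW c'_gt0) // exprMn.
    by apply: lerD; [rewrite mulr_natl mulr2n lerD | rewrite ler_wpM2l ?sqr_ge0].
  move: (eps_small) (c'_gt0); rewrite /X /Y /A /bootstrap_const; lra.
have : beta * (X + Y) < beta * c' by rewrite ltr_pM2l //; lra.
have Y_ge0 : 0 <= Y by rewrite /Y !addr_ge0 ?sqr_ge0.
have := ler_peMl Y_ge0 (ltW beta_gt1).
lra.
Qed.

Lemma b_le1 m : (m <= M)%N -> b m <= 1.
Proof.
suff all_le1 n : (n <= M)%N -> forall j, (j <= n)%N -> b j <= 1.
  by move=> mM; exact: all_le1 mM m (leqnn m).
elim: n => [_ j|n IH nM j]; rewrite ?leqn0.
- move=> /eqP ->; have : b 0%N ^+ 2 < 1.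
    apply: le_lt_trans b0_le _.
    have : mu0 * h ^+ 2 < mu0 * (eps * k) by rewrite ltr_pM2l.
    have : eps * mu0 * k <= eps * mu0.
      by rewrite ler_piMr // mulr_ge0 // ltW.
    by move: (eps_mu0); lra.
  by have := b_ge0 0%N; nra.
- rewrite leq_eqVlt ltnS => /orP[/eqP -> | jn]; last exact: IH (ltnW nM) j jn.
  exact: b_succ_le1 nM (IH (ltnW nM)).
Qed.

Lemma energy_estimate :
  (forall m, (m <= M)%N -> b m <= 1) /\
  \big[Num.max/0]_(m < M.+1) a m ^+ 2 + c * k * \sum_(m < M.+1) b m ^+ 2
    <= 5 * (E * (C * (h ^+ 2 + k ^+ 2))).
Proof.
set B := E * (C * (h ^+ 2 + k ^+ 2)).
have energy_le_B m : (m <= M)%N -> energy m <= B.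
  by move=> mM; apply: (energy_le mM) => j /andP[_ jm]; exact: b_le1 (leq_trans jm mM).
split; first exact: b_le1.
have max_le : \big[Num.max/0]_(m < M.+1) a m ^+ 2 <= B.
  apply: (big_ind (fun x => x <= B)) => [|x y xB yB|i _].
  - exact: le_trans (energy_ge0 0%N) (energy_le_B 0%N isT).
  - by rewrite ge_max xB.
  - exact: le_trans (energy_ge_sqr i) (energy_le_B i (ltn_ord i)).
have := le_trans (energy_ge_bsum M) (energy_le_B M (leqnn M)).
move: max_le; lra.
Qed.
End DiscreteEnergyBootstrap.


Section ThetaScheme.
Variables (R : realType) (p T Lam mu1 mu3 theta lam K mu0 eps h : R) (M : nat).
Variables (a b r s rho sig : nat -> R).

Local Notation k := (kappa T M).
Local Notation c := (mu1 * (1 + Lam) `^ (p - 2)).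
Local Notation c' := (mu1 / (1 + Lam)).
Local Notation L := (2 / c * K ^+ 2).
Local Notation E := (expR (L * T)).
Local Notation C := (mu0 * (2 + c + 2 / c)).

Hypotheses (p_gt1 : 1 < p) (p_le2 : p <= 2) (Lam_gt0 : 0 < Lam) (mu1_gt0 : 0 < mu1).
Hypotheses (lam_ge0 : 0 <= lam) (lam_le : lam <= Lam) (mu0_gt0 : 0 < mu0).
Hypothesis absorb : forall x y, 0 <= x -> 0 <= y ->
  mu3 * (x `^ (1 - theta) * y `^ theta) <= c' / 4 * x + K * y.
Hypotheses (k_gt0 : 0 < k) (k_lt_eps : k < eps) (eps_le1 : eps <= 1).
Hypotheses (h_small : h ^+ 2 < eps * k) (eps_lt_mu0 : eps < mu0^-1).
Hypothesis eps_lt : eps < c' / 4 / bootstrap_const c' K E C mu0.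
Hypotheses (a_ge0 : forall m, 0 <= a m) (b_ge0 : forall m, 0 <= b m).
Hypotheses (a0_le : a 0%N ^+ 2 <= mu0 * h ^+ 2) (b0_le : b 0%N ^+ 2 <= mu0 * h ^+ 2).
Hypotheses (r_sum : k * (\sum_(1 <= m < M.+1) r m ^+ 2) <= mu0 * h ^+ 2)
           (s_sum : k * (\sum_(1 <= m < M.+1) s m ^+ 2) <= mu0 * h ^+ 2)
           (rho_sum : k * (\sum_(1 <= m < M.+1) rho m ^+ 2) <= mu0 * k ^+ 2)
           (sig_sum : k * (\sum_(1 <= m < M.+1) sig m ^+ 2) <= mu0 * k ^+ 2).
Hypothesis theta_ineq : forall m, (1 <= m <= M)%N ->
  dt2 T M a m + mu1 * dissip p lam (b m)
    <= b m * r m + b m * rho m + mu3 * b m * b m.-1 `^ (1 - theta) * a m.-1 `^ theta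
       + s m ^+ 2 + sig m ^+ 2.

Lemma theta_scheme_estimate :
  (forall m, (m <= M)%N -> b m <= 1) /\
  \big[Num.max/0]_(m < M.+1) a m ^+ 2 + c * k * \sum_(m < M.+1) b m ^+ 2
    <= 5 * (E * (C * (h ^+ 2 + k ^+ 2))).
Proof.
have Lam1_gt0 : 0 < 1 + Lam by rewrite addr_gt0.
have c_gt0 : 0 < c by rewrite mulr_gt0 // powR_gt0.
have c'_gt0 : 0 < c' by rewrite divr_gt0.
have c'_le_c : c' <= c.
  by rewrite ler_pM2l // -powR_inv1 ?ler_powR ?ltW //; move: (p_gt1) (Lam_gt0); lra.
have L_ge0 : 0 <= L := mulr_ge0 (divr_ge0 (ler0n _ 2) (ltW c_gt0)) (sqr_ge0 K).
have growth : (1 + k * L) ^+ M <= E.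
  have := @exprn1D_le_expR R (k * L) M.
  rewrite (_ : k * L * M%:R = L * T); last by rewrite mulrAC kappa_mulrn // mulrC.
  by apply; rewrite addr_ge0 // mulr_ge0 // ltW.
have eps_mu0 : eps * mu0 < 1 by rewrite -ltr_pdivlMr // div1r.
have C_ge0 : 0 <= C by rewrite mulr_ge0 ?addr_ge0 ?divr_ge0 // ltW.
have eps_small : eps * bootstrap_const c' K E C mu0 < c' / 4.
  by rewrite -ltr_pdivlMr ?bootstrap_const_gt0 ?expR_ge0.
have d_ge_sqr m : (1 <= m <= M)%N -> b m <= 1 -> c * b m ^+ 2 <= mu1 * dissip p lam (b m).
  by move=> _ bm1; rewrite -mulrA ler_pM2l // dissip_ge_sqr.
have d_ge_lin m : (1 <= m <= M)%N -> 1 <= b m -> c' * b m <= mu1 * dissip p lam (b m).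
  by move=> _ bm1; rewrite mulrAC -mulrA ler_pM2l // dissip_ge_lin // ltW.
apply: energy_estimate k_gt0 k_lt_eps eps_le1 h_small c_gt0 c'_gt0 c'_le_c mu0_gt0
  growth eps_mu0 eps_small b_ge0 a0_le b0_le r_sum s_sum rho_sum sig_sum
  d_ge_sqr d_ge_lin _ => m mM.
apply: le_trans (theta_ineq mM) _.
rewrite !lerD2r lerD2l -![leLHS]mulrA [leLHS]mulrCA.
by rewrite ler_wpM2l // absorb.
Qed.

End ThetaScheme.

Theorem lemma2p4 (R : realType) (p T mu0 khat mu1 mu2 mu3 Lam theta : R) :
  1 < p -> p <= 2 -> 0 < T -> 0 < mu0 -> 0 < khat ->
  0 < mu1 -> 0 < mu2 -> 0 < mu3 -> 0 < Lam -> 0 < theta -> theta <= 1 ->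
  exists mu0bar kbar mu4 mu5 : R,
    [/\ 0 < mu0bar, 0 < kbar, 0 < mu4 & 0 < mu5] /\
    forall (lam : R) (a b r s rho sigma : R -> nat -> nat -> R),
      0 <= lam -> lam <= Lam ->
      (forall h M m, 0 <= a h M m) -> (forall h M m, 0 <= b h M m) ->
      (forall h M m, 0 <= r h M m) -> (forall h M m, 0 <= s h M m) ->
      (forall h M m, 0 <= rho h M m) -> (forall h M m, 0 <= sigma h M m) ->
      (forall h M, 0 < h -> h < (Num.sqrt mu0)^-1 ->
         0 < kappa T M -> kappa T M < khat ->
         (a h M 0%N ^+ 2 <= mu0 * h ^+ 2 /\ b h M 0%N ^+ 2 <= mu0 * h ^+ 2) /\
         [/\
             kappa T M * (\sum_(1 <= m < M.+1) r h M m ^+ 2) <= mu0 * h ^+ 2,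
             kappa T M * (\sum_(1 <= m < M.+1) s h M m ^+ 2) <= mu0 * h ^+ 2,
             kappa T M * (\sum_(1 <= m < M.+1) rho h M m ^+ 2)
               <= mu0 * kappa T M ^+ 2 &
             kappa T M * (\sum_(1 <= m < M.+1) sigma h M m ^+ 2)
               <= mu0 * kappa T M ^+ 2]) ->
      (forall h M m, 0 < h -> h < (Num.sqrt mu0)^-1 ->
         0 < kappa T M -> kappa T M < khat -> (1 <= m <= M)%N ->
         dt2 T M (a h M) m + mu1 * dissip p lam (b h M m)
           <= b h M m * r h M m + b h M m * rho h M m
              + mu2 * b h M m.-1 * b h M m
              + s h M m ^+ 2 + sigma h M m ^+ 2
         /\
         dt2 T M (a h M) m + mu1 * dissip p lam (b h M m)
           <= b h M m * r h M m + b h M m * rho h M m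
              + mu3 * b h M m * (b h M m.-1) `^ (1 - theta)
                  * (a h M m.-1) `^ theta
              + s h M m ^+ 2 + sigma h M m ^+ 2) ->
      forall h M, 0 < h -> 0 < kappa T M -> kappa T M < kbar ->
        h ^+ 2 < mu0bar * kappa T M ->
        (forall m, (m <= M)%N -> b h M m <= 1) /\
        \big[Num.max/0]_(m < M.+1) (a h M m ^+ 2)
          + mu1 * (1 + Lam) `^ (p - 2) * kappa T M
              * (\sum_(m < M.+1) b h M m ^+ 2)
        <= mu4 * (h ^+ 2 + kappa T M ^+ 2)
             * expR (2 * mu5 * kappa T M * M%:R).
Proof.
move=> p1 p2 T0 mu0_gt0 khat0 mu1_gt0 _ mu3_gt0 Lam0 th0 th1.
pose c := mu1 * (1 + Lam) `^ (p - 2); pose c' := mu1 / (1 + Lam).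
have c_gt0 : 0 < c by rewrite mulr_gt0 // powR_gt0 //; lra.
have c'_gt0 : 0 < c' by rewrite divr_gt0 //; lra.
have [K K_gt0 absorb] := powR_interp_absorb mu3_gt0 th0 th1 (divr_gt0 c'_gt0 (ltr0n _ 4)).
pose L := 2 / c * K ^+ 2; pose C := mu0 * (2 + c + 2 / c).
pose Q := bootstrap_const c' K (expR (L * T)) C mu0.
have C_gt0 : 0 < C by rewrite mulr_gt0 // !addr_gt0 ?divr_gt0.
have Q_gt0 : 0 < Q by rewrite bootstrap_const_gt0 ?expR_ge0 ?ltW.
have : all (fun x => 0 < x) [:: 1; khat; mu0^-1; c' / 4 / Q].
  by rewrite /= ltr01 khat0 invr_gt0 mu0_gt0 divr_gt0 // divr_gt0.
move=> /exists_gt0_lt_all[eps eps_gt0 /and5P[eps_lt1 eps_khat eps_mu0 eps_Q _]].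
exists eps, eps, (5 * C), (L / 2); split.
  split => //; first by rewrite mulr_gt0.
  by rewrite divr_gt0 // mulr_gt0 ?divr_gt0 ?exprn_gt0.
move=> lam a b r s rho sigma lam0 lamL a_ge0 b_ge0 _ _ _ _ data ineqs h M h0 k0 k_eps hk.
have k_khat : kappa T M < khat := lt_trans k_eps eps_khat.
have h_lt : h < (Num.sqrt mu0)^-1.
  apply: ltr_inv_sqrt_sqr (ltW h0) (lt_trans hk (lt_trans _ eps_mu0)) => //.
  by rewrite gtr_pMr // (lt_trans k_eps).
have [[a0 b0] [r_sum s_sum rho_sum sig_sum]] := data h M h0 h_lt k0 k_khat.
have [b_le1 est] := theta_scheme_estimate p1 p2 Lam0 mu1_gt0 lam0 lamL mu0_gt0 absorb
  k0 k_eps (ltW eps_lt1) hk eps_mu0 eps_Q (a_ge0 h M) (b_ge0 h M) a0 b0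
  r_sum s_sum rho_sum sig_sum (fun m mM => (ineqs h M m h0 h_lt k0 k_khat mM).2).
split => //; apply: le_trans est _.
rewrite (_ : 2 * (L / 2) * kappa T M * M%:R = L * T); last first.
  by rewrite -mulrA kappa_mulrn //; field.
rewrite (_ : 5 * C * _ * _ = 5 * (expR (L * T) * (C * (h ^+ 2 + kappa T M ^+ 2)))) //.
ring.
Qed.
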